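(* Let $h\ge1$ and $n$ be positive integers, and let $\phi:\mathbb{R}^n\to\mathbb{R}$ be a $(Q,R)$-bounded function whose Taylor series at $0$ has radius of convergence at least $\nu>0$. Let $L=(L^{(1)},\dots,L^{(T)})$ be a sequence of vectors in $\mathbb{R}^n$ with $\|L^{(t)}\|_\infty\le\nu$ for all $t\in[T]$. Suppose that for some $\alpha\in(0,1)$, $B_1\ge2e^2R$ and $B_0\ge3$, for each $0\le h'\le h$ and each $t\in[T-h']$ we have $\|(D_{h'}L)^{(t)}\|_\infty\le\frac1{B_1}\alpha^{h'}(h')^{B_0h'}$ (with $0^0:=1$). Then for all $t\in[T-h]$, $$\big|(D_h(\phi\circ L))^{(t)}\big|\le\frac{12RQe^2}{B_1}\cdot\alpha^h\cdot h^{B_0h+1},$$ where $\phi\circ L$ is the scalar sequence $(\phi(L^{(1)}),\dots,\phi(L^{(T)}))$.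
   Context: Finite differences: $(D_0L)^{(t)}=L^{(t)}$ and $(D_hL)^{(t)}=(D_{h-1}L)^{(t+1)}-(D_{h-1}L)^{(t)}$ for $1\le t\le T-h$. A function $\phi:\mathbb{R}^n\to\mathbb{R}$, real-analytic near the origin with Taylor series $\sum_{\gamma\in\mathbb{Z}_{\ge0}^n}a_\gamma z^\gamma$ at $0$ (with $z^\gamma=z_1^{\gamma_1}\cdots z_n^{\gamma_n}$, $|\gamma|=\gamma_1+\dots+\gamma_n$), is called $(Q,R)$-bounded if $\sum_{|\gamma|=k}|a_\gamma|\le Q R^k$ for every integer $k\ge0$. *)

From HB Require Import structures.
From mathcomp Require Import all_boot all_order all_algebra.
From mathcomp Require Import all_classical all_reals all_analysis.
Set Implicit Arguments. Unset Strict Implicit. Unset Printing Implicit Defensive.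
Import Order.TTheory GRing.Theory Num.Theory.
Import numFieldNormedType.Exports.
Local Open Scope classical_set_scope.
Local Open Scope ring_scope.

Definition supnorm {R : realType} {n : nat} (v : 'I_n -> R) : R :=
  \big[Num.max/0]_(i < n) `|v i|.

Definition monom {R : realType} {n : nat} (gam : 'I_n -> nat) (z : 'I_n -> R) : R :=
  \prod_(i < n) z i ^+ gam i.

(* the homogeneous part of degree k of sum_gamma a_gamma z^gamma:
   sum over multi-indices gamma with |gamma| = k (each gamma_i <= k) *)
Definition homog_part {R : realType} {n : nat} (a : ('I_n -> nat) -> R)
    (z : 'I_n -> R) (k : nat) : R :=
  \sum_(g : {ffun 'I_n -> 'I_k.+1} | (\sum_(i < n) (g i : nat))%N == k)
     a (fun i => (g i : nat)) * monom (fun i => (g i : nat)) z.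

Definition coef_abs_sum {R : realType} {n : nat} (a : ('I_n -> nat) -> R)
    (k : nat) : R :=
  \sum_(g : {ffun 'I_n -> 'I_k.+1} | (\sum_(i < n) (g i : nat))%N == k)
     `|a (fun i => (g i : nat))|.

Definition QR_bounded {R : realType} {n : nat} (a : ('I_n -> nat) -> R)
    (Q Rb : R) : Prop :=
  forall k : nat, coef_abs_sum a k <= Q * Rb ^+ k.

(* phi is given by the power series sum_gamma a_gamma z^gamma (summed by
   total degree) at every z with ||z||_inf <= nu *)
Definition taylor_repr_on {R : realType} {n : nat} (phi : ('I_n -> R) -> R)
    (a : ('I_n -> nat) -> R) (nu : R) : Prop :=
  forall z : 'I_n -> R, supnorm z <= nu ->
    series (homog_part a z) @ \oo --> phi z.

Fixpoint fdiff {R : realType} (u : nat -> R) (h t : nat) : R :=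
  match h with
  | 0 => u t
  | h'.+1 => fdiff u h' t.+1 - fdiff u h' t
  end.

Definition vfdiff {R : realType} {n : nat} (L : nat -> 'I_n -> R) (h t : nat)
    : 'I_n -> R :=
  fun i => fdiff (fun s => L s i) h t.

(* Write w_p(j) = j^(p j) (with 0^0 = 1) and call a scalar
   sequence u "C-bounded" when |(D_m u)^(t)| <= C alpha^m w_p(m) for every
   m <= h and every admissible t.  Three facts drive the proof.
   1. Finite differences are linear, kill constants, commute with limits, and
      obey the discrete Leibniz rule
        D_m(uv)^(t) = sum_i C(m,i) (D_i u)^(t) (D_(m-i) v)^(t+i).
   2. For p >= 2 the weights satisfy sum_i C(m,i) w_p(i) w_p(m-i) <= 3 w_p(m),
      so by Leibniz the product of a Cu-bounded and a Cv-bounded sequence is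
      (3 Cu Cv)-bounded.  Iterating, if every coordinate of L is eps-bounded,
      the monomial L^gamma is (3 eps)^|gamma|-bounded, and the homogeneous
      part of degree k of the Taylor series along L is
      (coef_abs_sum a k * (3 eps)^k)-bounded.
   3. The degree-0 part is constant, so for h >= 1 the h-th difference of a
      partial sum of the Taylor series is bounded by a geometric series,
      at most 6 Q R eps alpha^h w_p(h) when 6 R eps <= 1; passing to the limit
      bounds D_h(phi o L).
   The theorem follows with eps = 1/B1 and p = B0, after comparing constants. *)
From HB Require Import structures.
From mathcomp Require Import all_boot all_order all_algebra.
From mathcomp Require Import all_classical all_reals all_analysis.
From mathcomp Require Import zify ring lra.
Import Order.TTheory GRing.Theory Num.Theory.
Import numFieldNormedType.Exports.
Local Open Scope classical_set_scope.
Local Open Scope ring_scope.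

Section FiniteDifferences.
Context {R : realType}.
Implicit Types (u v : nat -> R).

Lemma fdiff_ext u v h t : (forall s, (t <= s <= t + h)%N -> u s = v s) ->
  fdiff u h t = fdiff v h t.
Proof.
elim: h t => [|h IH] t H /=; first by apply: H; rewrite addn0 leqnn.
rewrite (IH t.+1) ?(IH t) // => s /andP[h1 h2]; apply: H; apply/andP; split; lia.
Qed.

Lemma fdiff_sum (I : Type) (r : seq I) (P : pred I) (F : I -> nat -> R) h t :
  fdiff (fun s => \sum_(i <- r | P i) F i s) h t =
  \sum_(i <- r | P i) fdiff (F i) h t.
Proof. by elim: h t => [|h IH] t //=; rewrite !IH sumrB. Qed.

Lemma fdiffZ c u h t : fdiff (fun s => c * u s) h t = c * fdiff u h t.
Proof. by elim: h t => [|h IH] t //=; rewrite !IH mulrBr. Qed.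

Lemma fdiff_const (c : R) h t : (0 < h)%N -> fdiff (fun _ => c) h t = 0.
Proof.
case: h => // h _; elim: h t => [|h IH] t; first by rewrite /= subrr.
have -> : fdiff (fun=> c) h.+2 t = fdiff (fun=> c) h.+1 t.+1 - fdiff (fun=> c) h.+1 t by [].
by rewrite !IH subrr.
Qed.

Lemma fdiff_cvg (U : nat -> nat -> R) u h t :
  (forall s, (t <= s <= t + h)%N -> U ^~ s @ \oo --> u s) ->
  (fun N => fdiff (U N) h t) @ \oo --> fdiff u h t.
Proof.
elim: h t => [|h IH] t H /=; first by apply: H; rewrite addn0 leqnn.
apply: cvgB; apply: IH => s /andP[h1 h2]; apply: H; apply/andP; split; lia.
Qed.

Lemma fdiffM u v m t :
  fdiff (fun s => u s * v s) m t =
  \sum_(i < m.+1) 'C(m, i)%:R * (fdiff u i t * fdiff v (m - i) (t + i)).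
Proof.
elim: m t => [|m IH] t; first by rewrite big_ord1 /= bin0 mul1r addn0.
rewrite /= !IH.
pose F i := fdiff u i t * fdiff v (m.+1 - i) (t + i).
have -> : \sum_(i < m.+1) 'C(m, i)%:R * (fdiff u i t.+1 * fdiff v (m - i) (t.+1 + i))
    - \sum_(i < m.+1) 'C(m, i)%:R * (fdiff u i t * fdiff v (m - i) (t + i))
  = \sum_(i < m.+1) 'C(m, i)%:R * F i.+1 + \sum_(i < m.+1) 'C(m, i)%:R * F i.
  rewrite -sumrB -big_split; apply: eq_bigr => i _ /=.
  have Hi : (i <= m)%N := ltn_ord i.
  rewrite /F subSS (subSn Hi) /= addSn addnS; ring.
(* Pascal's rule C(m+1, i+1) = C(m, i) + C(m, i+1) regroups the two sums. *)
have pascal : forall i : 'I_m.+1, 'C(m.+1, lift ord0 i)%:R * F (lift ord0 i)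
   = 'C(m, i)%:R * F i.+1 + 'C(m, i.+1)%:R * F i.+1.
  by move=> i; rewrite /= /bump leq0n add1n binS natrD mulrDl addrC.
rewrite (eq_bigr (fun i : 'I_m.+2 => 'C(m.+1, i)%:R * F i)) //.
rewrite [RHS]big_ord_recl (eq_bigr _ (fun i _ => pascal i)) big_split /=.
rewrite [X in _ = _ + (_ + X)]big_ord_recr /= (bin_small (ltnSn m)) bin0.
rewrite [X in _ + X = _]big_ord_recl /= !bin0.
rewrite (eq_bigr (fun i : 'I_m => 'C(m, i.+1)%:R * F i.+1)); last first.
  by move=> i _; rewrite /bump leq0n add1n.
rewrite mulr0n mul0r !mul1r addr0; ring.
Qed.
End FiniteDifferences.

(* One term of the binomial expansion of m^m = ((m - i) + i)^m. *)
Lemma binomial_term_le m i :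
  (i <= m)%N -> ('C(m, i) * ((m - i) ^ (m - i) * i ^ i) <= m ^ m)%N.
Proof.
move=> Hi; have Hi' : (i < m.+1)%N by rewrite ltnS.
have -> : (m ^ m = (m - i + i) ^ m)%N by rewrite subnK.
by rewrite expnDn (bigD1 (Ordinal Hi')) //= leq_addr.
Qed.

Lemma bin_inner_ge m i : (0 < i < m)%N -> (m <= 'C(m, i))%N.
Proof.
elim: m i => [|m IH] i Hi; first lia.
case: i Hi => [|i] Hi; first lia.
rewrite binS; case: i Hi => [|i] Hi; first by rewrite bin1 bin0 addn1.
have H1 : (m <= 'C(m, i.+1))%N by apply: IH; lia.
have H2 : (0 < 'C(m, i.+2))%N by rewrite bin_gt0; lia.
lia.
Qed.

Section Weight.
Context {R : realType}.

Definition weight (p : R) (j : nat) : R := powR (j%:R) (p * j%:R).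

Lemma weight_pow p j : weight p j = powR ((j ^ j)%:R) p.
Proof.
rewrite /weight; case: j => [|j]; first by rewrite mulr0 powRr0 expn0 powR1.
by rewrite mulrC powRrM powR_mulrn // natrX.
Qed.

Lemma weight_ge0 p j : 0 <= weight p j.
Proof. exact: powR_ge0. Qed.

Lemma weight0 p : weight p 0 = 1.
Proof. by rewrite weight_pow expn0 powR1. Qed.

Lemma absorb_multiplier (p : R) (b x y m : nat) : (b * x <= y)%N -> (m <= b)%N ->
  (0 < m)%N -> (0 < x)%N -> 2 <= p ->
  b%:R * powR x%:R p <= powR y%:R p / m%:R.
Proof.
move=> Hbxy Hmb Hm Hx Hp.
rewrite ler_pdivlMr ?ltr0n //.
have p0 : 0 <= p by apply: le_trans Hp; lra.
have Ey : powR (b * x)%:R p <= powR y%:R p.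
  by apply: ge0_ler_powR => //; rewrite ?nnegrE ?ler_nat.
apply: le_trans Ey; rewrite natrM powRM //.
have b1 : 1 <= (b%:R : R) by rewrite ler1n; lia.
have Eb2 : (b%:R : R) ^+ 2 <= powR b%:R p.
  by rewrite -powR_mulrn ?ler_powR //; apply: le_trans b1.
have Ebm : (b%:R : R) * m%:R <= b%:R ^+ 2.
  by rewrite expr2 ler_wpM2l ?ler_nat //; apply: le_trans b1.
rewrite mulrAC; apply: ler_wpM2r; first exact: powR_ge0.
exact: le_trans Ebm Eb2.
Qed.

(* The binomial convolution of the weights: for p >= 2,
   sum_i C(m,i) w_p(i) w_p(m-i) <= 3 w_p(m).  The two extreme terms give
   2 w_p(m); each of the m - 1 inner terms is at most w_p(m) / m. *)
Lemma weight_conv_le (p : R) m : 2 <= p ->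
  \sum_(i < m.+1) 'C(m, i)%:R * (weight p i * weight p (m - i)) <= 3 * weight p m.
Proof.
move=> p2; case: m => [|m]; first by rewrite big_ord1 /= weight0 !mul1r; lra.
rewrite big_ord_recl big_ord_recr /= !bin0 binn subn0 subnn weight0 !mul1r mulr1.
have inner : \sum_(i < m) 'C(m.+1, bump 0 i)%:R
      * (weight p (bump 0 i) * weight p (m.+1 - bump 0 i))
    <= \sum_(i < m) (weight p m.+1 / m.+1%:R).
  apply: ler_sum => i _; rewrite /bump leq0n add1n.
  have Hi : (i < m)%N := ltn_ord i.
  rewrite !weight_pow -powRM ?ler0n // -natrM mulnC.
  apply: absorb_multiplier => //; first by apply: binomial_term_le; lia.
  - by apply: bin_inner_ge; lia.
  - by rewrite muln_gt0 !expn_gt0; lia.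
rewrite sumr_const card_ord in inner.
have mfrac : (m%:R : R) * (weight p m.+1 / m.+1%:R) <= weight p m.+1.
  rewrite mulrCA; apply: ler_piMr; first exact: weight_ge0.
  by rewrite ler_pdivrMr ?ltr0n // mul1r ler_nat.
have -> : weight p (bump 0 m) = weight p m.+1 by rewrite /bump leq0n add1n.
rewrite mulr_natl in mfrac; have := le_trans inner mfrac; lra.
Qed.
End Weight.

Lemma supnorm_ge {R : realType} {n : nat} (v : 'I_n -> R) i : `|v i| <= supnorm v.
Proof. by rewrite /supnorm (bigD1 i) //= le_max lexx. Qed.

Lemma homog_part0_const {R : realType} {n : nat} (a : ('I_n -> nat) -> R)
    (z z' : 'I_n -> R) :
  homog_part a z 0 = homog_part a z' 0.
Proof.
rewrite /homog_part; apply: eq_bigr => g _; congr (_ * _).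
rewrite /monom; apply: eq_bigr => i _.
by have -> : (g i : nat) = 0%N by case: (g i) => [[|k] Hk].
Qed.

Lemma geometric_sum_le2 {R : realType} {q : R} : 0 <= q -> q <= 1/2 ->
  forall N, \sum_(k < N) q ^+ k <= 2.
Proof.
move=> q0 q1; elim=> [|N IH]; first by rewrite big_ord0; lra.
rewrite big_ord_recl expr0.
rewrite (eq_bigr (fun i : 'I_N => q * q ^+ i)); last first.
  by move=> i _; rewrite /= /bump leq0n add1n exprS.
rewrite -mulr_sumr.
have : q * \sum_(i < N) q ^+ i <= q * 2 by apply: ler_wpM2l.
move: (q * _) => S; lra.
Qed.

(* The degree-1 bound forces Q R >= 0, the sign of all our constants. *)
Lemma QR_bounded_ge0 {R : realType} {n : nat} {a : ('I_n -> nat) -> R} {Q Rb : R} :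
  QR_bounded a Q Rb -> 0 <= Q * Rb.
Proof. by move=> Hbd; have := Hbd 1%N; rewrite expr1; apply: le_trans; rewrite sumr_ge0. Qed.

(* For (Q,R)-bounded coefficients and 6 R eps <= 1, the positive-degree
   weights sum_k coef_abs_sum a k (3 eps)^k form a geometric series of ratio
   3 R eps <= 1/2. *)
Lemma QR_bounded_tail_le {R : realType} {n : nat} (a : ('I_n -> nat) -> R)
    (Q Rb eps : R) :
  QR_bounded a Q Rb -> 0 <= eps -> 6 * Rb * eps <= 1 ->
  forall N, \sum_(k < N) coef_abs_sum a k.+1 * (3 * eps) ^+ k.+1
    <= 6 * (Q * Rb) * eps.
Proof.
move=> Hbd eps0 Heps N.
have c0 k : 0 <= coef_abs_sum a k by rewrite sumr_ge0.
have Q0 : 0 <= Q by have := Hbd 0%N; rewrite expr0 mulr1; apply: le_trans.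
have [Qz|Qn0] := eqVneq Q 0.
  rewrite Qz !mul0r mulr0 mul0r big1 // => k _.
  suff -> : coef_abs_sum a k.+1 = 0 by rewrite mul0r.
  by apply/eqP; rewrite eq_le c0 andbT; have := Hbd k.+1; rewrite Qz mul0r.
have Qpos : 0 < Q by rewrite lt_neqAle eq_sym Qn0 Q0.
have Rb0 : 0 <= Rb by rewrite -(pmulr_rge0 _ Qpos) (QR_bounded_ge0 Hbd).
pose q := Rb * (3 * eps).
have q0 : 0 <= q by rewrite /q !mulr_ge0.
have q1 : q <= 1/2 by rewrite /q; lra.
have C0 : 0 <= Q * Rb * (3 * eps) by rewrite !mulr_ge0.
apply: (@le_trans _ _ (\sum_(k < N) Q * Rb * (3 * eps) * q ^+ k)).
  apply: ler_sum => k _.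
  have -> : Q * Rb * (3 * eps) * q ^+ k = Q * Rb ^+ k.+1 * (3 * eps) ^+ k.+1.
    by rewrite /q exprMn !exprS; ring.
  by apply: ler_wpM2r; [rewrite exprn_ge0 // mulr_ge0 | exact: Hbd].
rewrite -mulr_sumr; apply: le_trans (ler_wpM2l C0 (geometric_sum_le2 q0 q1 N)) _.
by rewrite le_eqVlt; apply/orP; left; apply/eqP; ring.
Qed.

Section BoundedDifferences.
Variable R : realType.
Variables (T h : nat) (alpha p : R).
Hypothesis alpha_ge0 : 0 <= alpha.
Hypothesis p_ge2 : 2 <= p.

Definition diff_bounded (C : R) (u : nat -> R) :=
  forall m t, (m <= h)%N -> (1 <= t <= T - m)%N ->
  `|fdiff u m t| <= C * alpha ^+ m * weight p m.

Lemma diff_bounded_eq {C u v} : (forall s, u s = v s) ->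
  diff_bounded C u -> diff_bounded C v.
Proof.
move=> E H m t Hm Ht; rewrite -(@fdiff_ext _ u) ?H // => s _; exact: E.
Qed.

Lemma diff_bounded_one : diff_bounded 1 (fun _ => 1).
Proof.
move=> [|m] t Hm Ht; first by rewrite /= normr1 weight0 !mulr1.
by rewrite fdiff_const // normr0 mul1r mulr_ge0 ?weight_ge0 ?exprn_ge0.
Qed.

(* Products: Leibniz rule plus the weight convolution inequality. *)
Lemma diff_boundedM {Cu Cv u v} : 0 <= Cu -> 0 <= Cv ->
  diff_bounded Cu u -> diff_bounded Cv v ->
  diff_bounded (3 * Cu * Cv) (fun s => u s * v s).
Proof.
move=> Cu0 Cv0 Hu Hv m t Hm Ht; rewrite fdiffM.
apply: le_trans (ler_norm_sum _ _ _) _.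
pose K := Cu * Cv * alpha ^+ m.
have K0 : 0 <= K by rewrite !mulr_ge0 ?exprn_ge0.
apply: (@le_trans _ _
   (\sum_(i < m.+1) K * ('C(m, i)%:R * (weight p i * weight p (m - i))))).
  apply: ler_sum => i _.
  have Hi : (i <= m)%N := ltn_ord i.
  rewrite normrM ger0_norm ?ler0n // normrM.
  have -> : K * ('C(m, i)%:R * (weight p i * weight p (m - i))) =
     'C(m, i)%:R * ((Cu * alpha ^+ i * weight p i)
                    * (Cv * alpha ^+ (m - i) * weight p (m - i))).
    by rewrite /K -{1}(subnKC Hi) exprD; ring.
  apply: ler_wpM2l => //; apply: ler_pM => //; [apply: Hu | apply: Hv]; lia.
rewrite -mulr_sumr; apply: le_trans (ler_wpM2l K0 (weight_conv_le p m p_ge2)) _.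
by rewrite /K le_eqVlt; apply/orP; left; apply/eqP; ring.
Qed.

Lemma diff_boundedX {eps f} : 0 <= eps -> diff_bounded eps f ->
  forall j, diff_bounded (3 ^+ j * eps ^+ j.+1) (fun s => f s ^+ j.+1).
Proof.
move=> eps0 Hf; elim=> [|j IH].
  by rewrite expr0 mul1r expr1; apply: diff_bounded_eq Hf => s; rewrite expr1.
have C0 : 0 <= 3 ^+ j * eps ^+ j.+1 by rewrite mulr_ge0 ?exprn_ge0.
have -> : 3 ^+ j.+1 * eps ^+ j.+2 = 3 * eps * (3 ^+ j * eps ^+ j.+1).
  by rewrite !exprS; ring.
by apply: diff_bounded_eq (diff_boundedM eps0 C0 Hf IH) => s; rewrite [in RHS]exprS.
Qed.

Lemma diff_bounded_monom {n : nat} {L : nat -> 'I_n -> R} {eps : R}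
    (g : 'I_n -> nat) (r : seq 'I_n) :
  0 <= eps -> (forall i, diff_bounded eps (fun s => L s i)) ->
  diff_bounded ((3 * eps) ^+ (\sum_(i <- r) g i)%N)
    (fun s => \prod_(i <- r) L s i ^+ g i).
Proof.
move=> eps0 HL; elim: r => [|x r IH].
  by rewrite big_nil expr0; apply: diff_bounded_eq diff_bounded_one => s; rewrite big_nil.
rewrite big_cons; case E: (g x) => [|j].
  by rewrite add0n; apply: diff_bounded_eq IH => s; rewrite big_cons E expr0 mul1r.
have C0 : 0 <= 3 ^+ j * eps ^+ j.+1 by rewrite mulr_ge0 ?exprn_ge0.
have C1 : 0 <= (3 * eps) ^+ (\sum_(i <- r) g i)%N by rewrite exprn_ge0 // mulr_ge0.
have -> : (3 * eps) ^+ (j.+1 + \sum_(i <- r) g i)%N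
   = 3 * (3 ^+ j * eps ^+ j.+1) * (3 * eps) ^+ (\sum_(i <- r) g i)%N.
  by rewrite exprD (exprS (3 * eps) j) (exprMn j 3 eps) (exprS eps j); ring.
apply: diff_bounded_eq (diff_boundedM C0 C1 (diff_boundedX eps0 (HL x) j) IH).
by move=> s; rewrite big_cons E.
Qed.

Lemma diff_bounded_homog_part {n : nat} {L : nat -> 'I_n -> R} {eps : R}
    (a : ('I_n -> nat) -> R) k :
  0 <= eps -> (forall i, diff_bounded eps (fun s => L s i)) ->
  diff_bounded (coef_abs_sum a k * (3 * eps) ^+ k)
    (fun s => homog_part a (L s) k).
Proof.
move=> eps0 HL m t Hm Ht; rewrite /homog_part fdiff_sum.
apply: le_trans (ler_norm_sum _ _ _) _.
rewrite /coef_abs_sum -!mulrA mulr_suml; apply: ler_sum => g /eqP Hg.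
rewrite fdiffZ normrM; apply: ler_wpM2l => //.
have := diff_bounded_monom (fun i => g i : nat) (index_enum 'I_n) eps0 HL m t Hm Ht.
by rewrite Hg !mulrA.
Qed.

Lemma taylor_fdiff_bound {n : nat}
    (phi : ('I_n -> R) -> R) (a : ('I_n -> nat) -> R) (Q Rb eps : R)
    (L : nat -> 'I_n -> R) t :
  (0 < h)%N -> (1 <= t <= T - h)%N ->
  QR_bounded a Q Rb -> 0 <= eps -> 6 * Rb * eps <= 1 ->
  (forall i, diff_bounded eps (fun s => L s i)) ->
  (forall s, (t <= s <= t + h)%N ->
     series (homog_part a (L s)) @ \oo --> phi (L s)) ->
  `|fdiff (fun s => phi (L s)) h t|
    <= 6 * (Q * Rb) * eps * (alpha ^+ h * weight p h).
Proof.
move=> hpos Ht Hbd eps0 Heps HL Hrepr.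
pose K := alpha ^+ h * weight p h.
have K0 : 0 <= K by rewrite /K mulr_ge0 ?exprn_ge0 ?weight_ge0.
have const_term : fdiff (fun s => homog_part a (L s) 0) h t = 0.
  rewrite (@fdiff_ext _ _ (fun _ => homog_part a (L 0%N) 0)) ?fdiff_const //.
  by move=> s _; exact: homog_part0_const.
have partial_sum N :
    `|fdiff (fun s => series (homog_part a (L s)) N) h t| <= 6 * (Q * Rb) * eps * K.
  rewrite /series /= fdiff_sum big_mkord.
  case: N => [|N].
    by rewrite big_ord0 normr0 mulr_ge0 // mulr_ge0 // mulr_ge0 // (QR_bounded_ge0 Hbd).
  rewrite big_ord_recl const_term add0r.
  apply: le_trans (ler_norm_sum _ _ _) _.
  apply: (@le_trans _ _
     (\sum_(k < N) coef_abs_sum a k.+1 * (3 * eps) ^+ k.+1 * K)).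
    apply: ler_sum => k _; rewrite /K mulrA.
    exact: (diff_bounded_homog_part a k.+1 eps0 HL h t (leqnn h) Ht).
  by rewrite -mulr_suml ler_wpM2r // QR_bounded_tail_le.
have Hcvg : (fun N => fdiff (fun s => series (homog_part a (L s)) N) h t) @ \oo
    --> fdiff (fun s => phi (L s)) h t.
  exact: (fdiff_cvg (fun N s => series (homog_part a (L s)) N)).
by apply: (cvgr_to_le (cvg_norm Hcvg)); apply: nearW.
Qed.

End BoundedDifferences.

Theorem lemma4p4 (R : realType) (h n T : nat) (hpos : (1 <= h)%N) (npos : (0 < n)%N)
  (phi : ('I_n -> R) -> R) (a : ('I_n -> nat) -> R) (Q Rb nu : R)
  (Hbounded : QR_bounded a Q Rb) (nu_pos : 0 < nu)
  (Htaylor : taylor_repr_on phi a nu)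
  (L : nat -> 'I_n -> R)
  (HL : forall t : nat, (1 <= t <= T)%N -> supnorm (L t) <= nu)
  (alpha B1 B0 : R) (Halpha : 0 < alpha < 1)
  (HB1 : 2 * expR 1 ^+ 2 * Rb <= B1) (HB0 : 3 <= B0)
  (HD : forall h' t : nat, (h' <= h)%N -> (1 <= t <= T - h')%N ->
     supnorm (vfdiff L h' t)
       <= B1^-1 * alpha ^+ h' * powR (h'%:R) (B0 * h'%:R)) :
  forall t : nat, (1 <= t <= T - h)%N ->
    `| fdiff (fun s => phi (L s)) h t |
      <= 12 * Rb * Q * expR 1 ^+ 2 / B1 * alpha ^+ h
         * powR (h%:R) (B0 * h%:R + 1).
Proof.
move=> t Ht.
have alpha0 : 0 <= alpha by case/andP: Halpha => /ltW.
have p2 : 2 <= B0 by lra.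
have HLi i : diff_bounded R T h alpha B0 B1^-1 (fun s => L s i).
  by move=> m s Hm Hs; apply: le_trans (supnorm_ge (vfdiff L m s) i) (HD m s Hm Hs).
(* Order 0 of the hypothesis gives |L^(t)_i| <= B1^-1, so B1^-1 >= 0. *)
have eps0 : 0 <= B1^-1.
  have := HLi (Ordinal npos) 0%N t (leq0n h) (_ : (1 <= t <= T - 0)%N).
  rewrite weight0 !mulr1 => H; apply: le_trans (H _); [exact: normr_ge0 | lia].
set E := expR 1 ^+ 2 in HB1 *.
have E4 : 4 <= E.
  have e2 : 2 <= expR (1 : R) by have := expR_ge1Dx (1 : R); lra.
  by rewrite /E expr2; have := ler_pM (_ : 0 <= 2) (_ : 0 <= 2) e2 e2; lra.
have HRb : 6 * Rb * B1^-1 <= 1.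
  have H2E : 2 * E * (Rb * B1^-1) <= 1.
    rewrite mulrA; apply: le_trans (ler_wpM2r eps0 HB1) _.
    by have [->|nz] := eqVneq B1 0; [rewrite mul0r | rewrite mulfV].
  rewrite -mulrA; have [x0|/ltW x0] := lerP 0 (Rb * B1^-1); last lra.
  have := ler_wpM2r x0 E4; lra.
have := @taylor_fdiff_bound R T h alpha B0 alpha0 p2 n phi a Q Rb B1^-1 L t hpos Ht Hbounded eps0 HRb HLi.
have Hrepr s : (t <= s <= t + h)%N ->
    series (homog_part a (L s)) @ \oo --> phi (L s).
  by move=> Hs; apply: Htaylor; apply: HL; lia.
move=> /(_ Hrepr) /le_trans; apply.
(* Compare constants: 6 <= 12 E h since E >= 4 and h >= 1. *)
have powR_succ : powR h%:R (B0 * h%:R + 1) = weight B0 h * h%:R.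
  rewrite powRD ?powRr1 ?ler0n //.
  by rewrite pnatr_eq0 -lt0n hpos implybT.
pose X := Q * Rb * B1^-1 * (alpha ^+ h * weight B0 h).
have X0 : 0 <= X.
  apply: mulr_ge0; last by rewrite mulr_ge0 ?exprn_ge0 ?weight_ge0.
  by rewrite mulr_ge0 // (QR_bounded_ge0 Hbounded).
have Eh : 4 * 1 <= E * h%:R by apply: ler_pM; rewrite ?ler1n.
rewrite powR_succ.
have -> : 12 * Rb * Q * E / B1 * alpha ^+ h * (weight B0 h * h%:R)
   = 12 * (E * h%:R) * X by rewrite /X; ring.
have -> : 6 * (Q * Rb) * B1^-1 * (alpha ^+ h * weight B0 h) = 6 * X.
  by rewrite /X; ring.
by apply: ler_wpM2r => //; lra.
Qed.
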